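(* Let $\mu$ be a probability measure on $[0,1]$. Then $\tilde\rho(\mu)(\bar\mu)=\max_{p\in[0,1]}\tilde\rho(\mu)(p)$, and for every $p\in[0,1]$, \[\tilde\rho(\mu)(\bar\mu)-\tilde\rho(\mu)(p)\le 2|\bar\mu-p|.\] If moreover $\mu$ has a density bounded by some constant $M>0$, then $\rho(\mu)=\tilde\rho(\mu)$ and \[0\le \rho(\mu)(\bar\mu)-\rho(\mu)(p)\le M|\bar\mu-p|^2\qquad\text{for all }p\in[0,1].\]
   Context: For a probability measure $\mu$ on $[0,1]$, let $\bar\mu:=\int_{[0,1]}x\,\mathrm d\mu(x)$, and write $\mu[a,b]$, $\mu[a,b)$, $\mu\{p\}$ for the $\mu$-measure of the corresponding sets. Define functions $\tilde\rho(\mu),\rho(\mu):[0,1]\to\mathbb R$ by \[\tilde\rho(\mu)(p):=\int_0^p\big(\mu[0,\lambda]+\mu[0,\lambda)\big)\,\mathrm d\lambda+\big(\mu[0,p]+\mu[0,p)\big)(\bar\mu-p),\] \[\rho(\mu)(p):=\tilde\rho(\mu)(p)+\mu\{p\}\Big(\int_0^p\mu[0,\lambda]\,\mathrm d\lambda+\int_p^1\mu[\lambda,1]\,\mathrm d\lambda\Big).\] ''$\mu$ has a density bounded by $M$'' means $\mu$ is absolutely continuous with respect to Lebesgue measure with a density $f$ satisfying $f\le M$. *)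

From HB Require Import structures.
From mathcomp Require Import all_boot all_order all_algebra.
From mathcomp Require Import all_classical all_reals all_analysis.
Set Implicit Arguments. Unset Strict Implicit. Unset Printing Implicit Defensive.
Import Order.TTheory GRing.Theory Num.Theory.
Local Open Scope classical_set_scope.
Local Open Scope ring_scope.

(* A probability measure on [0,1] is represented as a (Borel) probability
   measure [mu] on the real line with [mu `[0,1]%classic = 1]. *)

Section Defs.
Variable R : realType.
Implicit Types (mu : probability (measurableTypeR R) R) (p l : R).

Definition mbar mu : R := Rintegral mu `[0, 1]%classic (fun x => x).

Definition Fc mu l : R := fine (mu `[0, l]%classic).
Definition Fo mu l : R := fine (mu `[0, l[%classic).
Definition Gc mu l : R := fine (mu `[l, 1]%classic).
Definition atom mu p : R := fine (mu [set p]).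

Definition lint (a b : R) (f : R -> R) : R :=
  Rintegral (@lebesgue_measure R) `[a, b]%classic f.

Definition rho_tilde mu p : R :=
  lint 0 p (fun l => Fc mu l + Fo mu l) + (Fc mu p + Fo mu p) * (mbar mu - p).

Definition rho mu p : R :=
  rho_tilde mu p + atom mu p * (lint 0 p (Fc mu) + lint p 1 (Gc mu)).

Definition has_density_bounded_by mu (M : R) : Prop :=
  exists f : R -> R,
    measurable_fun setT f /\ (forall x, 0 <= f x <= M) /\
    forall A : set R, measurable A ->
      mu A = (\int[@lebesgue_measure R]_(x in A) (f x)%:E)%E.

End Defs.

(* Write G(l) = mu[0,l] + mu[0,l), a nondecreasing function with values in
   [0,2], and Psi(p) = int_0^p G.  Then rho_tilde(mu)(p) = Psi(p) + G(p)(mbar - p)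
   is the value at mbar of the tangent line to the convex function Psi at p,
   so it is largest for p = mbar, and the gap is an integral of G(x) - G(p)
   over the interval between p and mbar, hence at most 2 |mbar - p|.  A
   density bounded by M makes mu atomless (so rho = rho_tilde) and G
   2M-Lipschitz, which improves the gap to M |mbar - p|^2. *)
From HB Require Import structures.
From mathcomp Require Import all_boot all_order all_algebra.
From mathcomp Require Import all_classical all_reals all_analysis.
From mathcomp Require Import ring lra measurable_realfun.
Import Order.TTheory GRing.Theory Num.Theory.
Import numFieldNormedType.Exports.
Set Implicit Arguments. Unset Strict Implicit. Unset Printing Implicit Defensive.
Local Open Scope classical_set_scope.
Local Open Scope ring_scope.

Section IntervalIntegral.
Variable R : realType.
Local Notation leb := (@lebesgue_measure R).
Implicit Types (a b c k : R) (g h : R -> R).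

Lemma measurable_bounded_by_integrable d (T : measurableType d)
    (nu : {measure set T -> \bar R}) (A : set T) (g : T -> R) c :
  measurable A -> (nu A < +oo)%E -> measurable_fun A g ->
  (forall x, A x -> `|g x| <= c) -> nu.-integrable A (EFin \o g).
Proof.
move=> mA Afin mg g_le; apply: measurable_bounded_integrable => //.
exists c; split; first exact: num_real.
by move=> e ce x Ax; apply: le_trans (g_le x Ax) (ltW ce).
Qed.

Lemma lebesgue_itv_lty a b : (leb `[a, b] < +oo)%E.
Proof. by rewrite lebesgue_measure_itv; case: ifP => _ //=; rewrite ltry. Qed.

Lemma nondecreasing_bounded_integrable g a b c : nondecreasing_fun g ->
  (forall x, a <= x <= b -> `|g x| <= c) -> leb.-integrable `[a, b] (EFin \o g).
Proof.
move=> g_nd g_le; apply: (measurable_bounded_by_integrable (c := c)) => //.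
  exact: lebesgue_itv_lty.
exact: nondecreasing_measurable.
Qed.

Lemma integrable_cst_itv a b c : leb.-integrable `[a, b] (EFin \o (fun=> c)).
Proof. by apply: (nondecreasing_bounded_integrable (c := `|c|)). Qed.

Lemma integrable_shift_itv a b :
  leb.-integrable `[a, b] (EFin \o (fun x => x - a)).
Proof.
apply: (nondecreasing_bounded_integrable (c := b - a)) => [x y|x /andP[ax xb]].
  by rewrite lerD2r.
by rewrite ger0_norm ?subr_ge0 // lerD2r.
Qed.

Lemma integrable_affine_itv a b c k :
  leb.-integrable `[a, b] (EFin \o (fun x => c + k * (x - a))).
Proof.
exact: integrableD _ (integrable_cst_itv a b c)
  (integrableZl _ k (integrable_shift_itv a b)).
Qed.

Lemma lint_cst a b c : a <= b -> lint a b (fun=> c) = c * (b - a).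
Proof.
move=> ab; rewrite /lint Rintegral_cst //; congr (_ * _).
have := lebesgue_measure_itv `[a, b]; rewrite /= => ->; case: ltP => [//|ba].
by rewrite (@le_anti _ _ a b) ?ab ?ba ?subrr.
Qed.

Lemma le_lint a b g h : leb.-integrable `[a, b] (EFin \o g) ->
  leb.-integrable `[a, b] (EFin \o h) ->
  (forall x, a <= x <= b -> g x <= h x) -> lint a b g <= lint a b h.
Proof.
by move=> ig ih gh; apply: le_Rintegral => // x; rewrite /= in_itv; apply: gh.
Qed.

Lemma lint_sub g a b : 0 <= a <= b -> leb.-integrable `[0, b] (EFin \o g) ->
  lint 0 b g - lint 0 a g = lint a b g.
Proof.
move=> /andP[a0 ab] ig; rewrite /lint.
rewrite (@Rintegral_itvB _ g (BLeft 0) (BRight b) a) ?bnd_simp //.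
rewrite Rintegral_itv_obnd_cbnd //.
by apply: integrableS ig => //; apply: subset_itvr; rewrite bnd_simp.
Qed.

Let half_square_is_derive a (x : R) :
  is_derive x 1 (fun y : R => (y - a) ^+ 2 / 2) (x - a).
Proof. by apply: is_derive_eq; rewrite subr0 /GRing.scale /=; field. Qed.

Let half_square_continuous a (x : R) :
  {for x, continuous (fun y : R => (y - a) ^+ 2 / 2)}.
Proof.
apply: differentiable_continuous; apply/derivable1_diffP.
exact: (@ex_derive _ _ _ _ _ _ _ (half_square_is_derive a x)).
Qed.

Lemma lint_shift a b : a <= b -> lint a b (fun x => x - a) = (b - a) ^+ 2 / 2.
Proof.
rewrite le_eqVlt => /predU1P[<-|ab].
  by rewrite /lint set_itv1 Rintegral_set1 subrr expr0n mul0r.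
rewrite /lint /Rintegral (@continuous_FTC2 _ _ (fun y => (y - a) ^+ 2 / 2)) //.
- by rewrite subrr expr0n mul0r sube0.
- apply: continuous_in_subspaceT => x _.
  by apply: continuousB => //; exact: cvg_cst.
- split.
  + by move=> x _; exact: (@ex_derive _ _ _ _ _ _ _ (half_square_is_derive a x)).
  + by apply: cvg_at_right_filter; exact: half_square_continuous.
  + by apply: cvg_at_left_filter; exact: half_square_continuous.
- move=> x _; rewrite derive1E.
  exact: (@derive_val _ _ _ _ _ _ _ (half_square_is_derive a x)).
Qed.

Lemma lint_affine a b c k : a <= b ->
  lint a b (fun x => c + k * (x - a)) = c * (b - a) + k * ((b - a) ^+ 2 / 2).
Proof.
move=> ab.
have ik : leb.-integrable `[a, b] (EFin \o (fun x => k * (x - a))).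
  apply: eq_integrable (integrable_affine_itv a b 0 k) => // x _ /=.
  by rewrite add0r.
rewrite /lint RintegralD ?integrable_cst_itv //.
rewrite RintegralZl ?integrable_shift_itv //.
by rewrite -/(lint a b _) -/(lint a b _) lint_cst // lint_shift.
Qed.

End IntervalIntegral.

Section SupportingLine.
Variables (R : realType) (g : R -> R) (c : R).
Hypothesis g_nd : nondecreasing_fun g.
Hypothesis g_bounded : forall x, `|g x| <= c.

Definition supporting_line (p x : R) : R := lint 0 p g + g p * (x - p).

Let integrable_g a b : (@lebesgue_measure R).-integrable `[a, b] (EFin \o g).
Proof. exact: nondecreasing_bounded_integrable. Qed.

Lemma lint_nondecreasing_bounds p q : p <= q ->
  g p * (q - p) <= lint p q g <= g q * (q - p).
Proof.
move=> pq; rewrite -!lint_cst //; apply/andP; split;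
  apply: le_lint => //; try exact: integrable_cst_itv.
- by move=> x /andP[px _]; apply: g_nd.
- by move=> x /andP[_ xq]; apply: g_nd.
Qed.

Lemma supporting_line_subl p q : 0 <= p <= q ->
  supporting_line q q - supporting_line p q = lint p q g - g p * (q - p).
Proof.
move=> hpq; rewrite /supporting_line -(lint_sub hpq) //; ring.
Qed.

Lemma supporting_line_subr p q : 0 <= q <= p ->
  supporting_line q q - supporting_line p q = g p * (p - q) - lint q p g.
Proof.
move=> hqp; rewrite /supporting_line -(lint_sub hqp) //; ring.
Qed.

Lemma supporting_line_gap p q : 0 <= p -> 0 <= q ->
  0 <= supporting_line q q - supporting_line p q <= `|g q - g p| * `|q - p|.
Proof.
move=> p0 q0; have [pq|qp] := leP p q.
- have /andP[lo hi] := lint_nondecreasing_bounds pq.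
  rewrite supporting_line_subl ?p0 // !ger0_norm ?subr_ge0 ?g_nd //.
  apply/andP; split; lra.
- have /andP[lo hi] := lint_nondecreasing_bounds (ltW qp).
  rewrite supporting_line_subr ?q0 ?(ltW qp) //.
  rewrite !ler0_norm ?subr_le0 ?g_nd ?(ltW qp) //.
  apply/andP; split; nra.
Qed.

Lemma supporting_line_gap_lipschitz (L p q : R) : 0 <= p -> 0 <= q ->
  (forall x y, 0 <= x <= y -> g y - g x <= L * (y - x)) ->
  supporting_line q q - supporting_line p q <= L / 2 * `|q - p| ^+ 2.
Proof.
move=> p0 q0 g_lip; rewrite real_normK ?num_real //.
have [pq|qp] := leP p q.
- rewrite supporting_line_subl ?p0 //.
  have : lint p q g <= lint p q (fun x => g p + L * (x - p)).
    apply: le_lint => //; first exact: integrable_affine_itv.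
    move=> x /andP[px _]; have := g_lip p x; rewrite p0 px; lra.
  rewrite lint_affine //; lra.
- rewrite supporting_line_subr ?q0 ?(ltW qp) //.
  have : lint q p (fun x => (g p - L * (p - q)) + L * (x - q)) <= lint q p g.
    apply: le_lint => //; first exact: integrable_affine_itv.
    move=> x /andP[qx xp]; have := g_lip x p; rewrite (le_trans q0 qx) xp; lra.
  rewrite lint_affine ?(ltW qp) // -(opprB p q) sqrrN; lra.
Qed.

End SupportingLine.

Section Measure.
Variables (R : realType) (mu : probability (measurableTypeR R) R).

Definition Fco (l : R) : R := Fc mu l + Fo mu l.

Lemma rho_tildeE p : rho_tilde mu p = supporting_line Fco p (mbar mu).
Proof. by []. Qed.

Lemma fine_probability_itv (A : set R) : measurable A -> 0 <= fine (mu A) <= 1.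
Proof.
move=> mA; rewrite fine_ge0 ?measure_ge0 //=.
by rewrite -lee_fin fineK ?fin_num_measure //; exact: probability_le1.
Qed.

Lemma le_fine_probability (A B : set R) : measurable A -> measurable B ->
  A `<=` B -> fine (mu A) <= fine (mu B).
Proof.
move=> mA mB AB; rewrite fine_le ?fin_num_measure //.
by apply: le_measure => //; rewrite inE.
Qed.

Lemma Fco_nondecreasing : nondecreasing_fun Fco.
Proof.
move=> x y xy; apply: lerD; apply: le_fine_probability => //;
  by apply: subset_itvl; rewrite bnd_simp.
Qed.

Lemma Fco_ge0_le2 l : 0 <= Fco l <= 2.
Proof.
have /andP[lc0 lc1] := fine_probability_itv (measurable_itv `[0, l]).
have /andP[lo0 lo1] := fine_probability_itv (measurable_itv `[0, l[).
by rewrite /Fco /Fc /Fo addr_ge0 //= -[2]/(1 + 1) lerD.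
Qed.

Lemma norm_Fco_le2 l : `|Fco l| <= 2.
Proof. by have /andP[l0 l2] := Fco_ge0_le2 l; rewrite ger0_norm. Qed.

Lemma dist_Fco_le2 x y : `|Fco x - Fco y| <= 2.
Proof.
have /andP[? ?] := Fco_ge0_le2 x; have /andP[? ?] := Fco_ge0_le2 y.
by rewrite ler_norml; apply/andP; split; lra.
Qed.

Lemma mbar_ge0_le1 : 0 <= mbar mu <= 1.
Proof.
have mu01 := fine_probability_itv (measurable_itv `[0, 1]).
have mu01_lty : (mu `[0%R, 1%R]%classic < +oo)%E.
  by rewrite ltey_eq fin_num_measure.
have iid : mu.-integrable `[0, 1] (EFin \o id).
  apply: (measurable_bounded_by_integrable (c := 1)) => // x.
  by rewrite /= in_itv /= => /andP[x0 x1]; rewrite ger0_norm.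
have ione : mu.-integrable `[0, 1] (EFin \o (fun=> 1)).
  by apply: (measurable_bounded_by_integrable (c := 1)) => // x _; rewrite normr1.
rewrite /mbar Rintegral_ge0 /=; last by move=> x; rewrite /= in_itv => /andP[].
apply: le_trans (le_Rintegral _ iid ione _) _ => //.
  by move=> x; rewrite /= in_itv /= => /andP[].
by rewrite Rintegral_cst // mul1r; case/andP: mu01.
Qed.

Section BoundedDensity.
Variables (M : R) (f : R -> R).
Hypothesis mf : measurable_fun setT f.
Hypothesis f_ge0_leM : forall x, 0 <= f x <= M.
Hypothesis mu_density : forall A : set R, measurable A ->
  mu A = (\int[@lebesgue_measure R]_(x in A) (f x)%:E)%E.

Let integrable_f a b : (@lebesgue_measure R).-integrable `[a, b] (EFin \o f).
Proof.
apply: (measurable_bounded_by_integrable (c := M)) => //.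
- exact: lebesgue_itv_lty.
- exact: measurable_funS mf.
- by move=> x _; have /andP[f0 fM] := f_ge0_leM x; rewrite ger0_norm.
Qed.

Lemma Fc_density l : Fc mu l = lint 0 l f.
Proof. by rewrite /Fc /lint /Rintegral mu_density. Qed.

Lemma Fo_density l : Fo mu l = lint 0 l f.
Proof.
rewrite /Fo /lint mu_density // -/(Rintegral _ _ _) Rintegral_itv_bndo_bndc //.
apply: integrableS (integrable_f 0 l) => //.
by apply: subset_itvl; rewrite bnd_simp.
Qed.

Lemma rho_density p : rho mu p = rho_tilde mu p.
Proof. by rewrite /rho /atom mu_density // integral_set1 mul0r addr0. Qed.

Lemma Fco_lipschitz x y : 0 <= x <= y -> Fco y - Fco x <= 2 * M * (y - x).
Proof.
have Fco_density l : Fco l = 2 * lint 0 l f.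
  by rewrite /Fco Fc_density Fo_density mulr2n mulrDl mul1r.
move=> hxy; rewrite !Fco_density -mulrBr lint_sub //.
rewrite -mulrA ler_wpM2l // -lint_cst; last by case/andP: hxy.
apply: le_lint => //; first exact: integrable_cst_itv.
by move=> z _; case/andP: (f_ge0_leM z).
Qed.

End BoundedDensity.
End Measure.

Theorem lemma2p1 (R : realType) (mu : probability (measurableTypeR R) R) :
  mu `[0, 1]%classic = 1%E ->
  [/\ 0 <= mbar mu <= 1,
      (forall p : R, 0 <= p <= 1 -> rho_tilde mu p <= rho_tilde mu (mbar mu)),
      (forall p : R, 0 <= p <= 1 ->
         rho_tilde mu (mbar mu) - rho_tilde mu p <= 2 * `|mbar mu - p|) &
      (forall M : R, 0 < M -> has_density_bounded_by mu M ->
         (forall p : R, 0 <= p <= 1 -> rho mu p = rho_tilde mu p) /\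
         (forall p : R, 0 <= p <= 1 ->
            0 <= rho mu (mbar mu) - rho mu p <= M * `|mbar mu - p| ^+ 2))].
Proof.
move=> _; have q01 := mbar_ge0_le1 mu; case/andP: (q01) => q0 q1.
have gap p : 0 <= p <= 1 ->
    0 <= rho_tilde mu (mbar mu) - rho_tilde mu p <= 2 * `|mbar mu - p|.
  case/andP=> p0 _; rewrite !rho_tildeE.
  have /andP[-> le_gap] :=
    supporting_line_gap (Fco_nondecreasing mu) (norm_Fco_le2 mu) p0 q0.
  by apply: le_trans le_gap _; rewrite ler_wpM2r ?dist_Fco_le2.
split=> //.
- by move=> p /gap /andP[]; rewrite subr_ge0.
- by move=> p /gap /andP[].
move=> M _ [f [mf [f_bnd mu_f]]].
split=> [p _|p hp]; first exact: (rho_density mu_f).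
rewrite !(rho_density mu_f) //; have /andP[-> _] := gap p hp.
case/andP: hp => p0 _; rewrite !rho_tildeE.
have := supporting_line_gap_lipschitz (Fco_nondecreasing mu) (norm_Fco_le2 mu)
  p0 q0 (Fco_lipschitz mf f_bnd mu_f).
by have -> : 2 * M / 2 = M by field.
Qed.
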